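(* For all integers $i\geq 1$, \[ v_3(a_i+1)=\begin{cases} 0, & i\equiv 0,1,2,3,5,6,7 \pmod 8;\\ 1, & i\equiv 4 \text{ or } 12 \pmod{24};\\ v_3(i+4)+1, & i\equiv 20\pmod{24}. \end{cases} \]
   Context: The Narayana sequence $(a_n)_{n\geq 0}$ is defined by $a_0=0$, $a_1=a_2=1$ and $a_n=a_{n-1}+a_{n-3}$ for all $n\geq 3$. For a nonzero integer $x$, $v_3(x)$ denotes the $3$-adic valuation of $x$ (the exponent of the largest power of $3$ dividing $x$). *)

From mathcomp Require Import all_boot.
Set Implicit Arguments. Unset Strict Implicit. Unset Printing Implicit Defensive.

(* Narayana sequence: a_0 = 0, a_1 = a_2 = 1, a_n = a_(n-1) + a_(n-3) (n >= 3).
   narayana_trip n = (a_n, a_(n+1), a_(n+2)). *)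
Fixpoint narayana_trip (n : nat) : nat * nat * nat :=
  match n with
  | 0 => (0, 1, 1)
  | m.+1 => let: (x, y, z) := narayana_trip m in (y, z, z + x)
  end.

Definition narayana (n : nat) : nat := (narayana_trip n).1.1.

Lemma narayana_check :
  [seq narayana n | n <- iota 0 10] = [:: 0; 1; 1; 1; 2; 3; 4; 6; 9; 13].
Proof. by []. Qed.

Lemma narayana_rec n : narayana n.+3 = narayana n.+2 + narayana n.
Proof.
rewrite /narayana /=; case: (narayana_trip n) => [[x y] z] /=; by [].
Qed.

(* Work in Z[t]/(t^3 - t^2 - 1).  The powers of t have Narayana numbers as
   coordinates, and the linear form nform sends t^(n+4) to a_n and 1 to -1.
   A computation gives t^24 = 1 + 9 nu with nform nu = 97, prime to 3.
   Modulo 9 this makes (a_n) 24-periodic, so the first two cases reduce to a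
   check of 24 residues.  For i = 24 m - 4 with m = 3^k n and 3 not dividing n,
   lifting the exponent gives t^(24 m) = 1 + 3^(k+2) (n nu + 3 r); applying
   nform yields a_i + 1 = 3^(k+2) (97 n + 3 nform r), so
   v_3(a_i + 1) = k + 2 = v_3(i + 4) + 1. *)

From HB Require Import structures.
From mathcomp Require Import all_boot all_algebra ring zify.
Set Implicit Arguments.
Unset Strict Implicit.
Unset Printing Implicit Defensive.

Import GRing.Theory.
Local Open Scope ring_scope.

Section LiftingTheExponent.
Variables (R : comPzRingType) (v : R).

Lemma exp_one_plus_pow3 j n : (0 < j)%N ->
  exists r : R, (1 + 3 ^+ j * v) ^+ n = 1 + 3 ^+ j * (n%:R * v + 3 * r).
Proof.
case: j => // j _; rewrite exprS.
elim: n => [|n [r IHn]]; first by exists 0; ring.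
by exists (r + 3 ^+ j * (n%:R * v + 3 * r) * v); rewrite exprSr IHn; ring.
Qed.

Lemma cube_one_plus_pow3 j n r : (0 < j)%N -> exists r' : R,
  (1 + 3 ^+ j * (n%:R * v + 3 * r)) ^+ 3 = 1 + 3 ^+ j.+1 * (n%:R * v + 3 * r').
Proof.
case: j => // j _; set z := n%:R * v + 3 * r.
exists (r + 3 ^+ j * z ^+ 2 + 3 ^+ j ^+ 2 * z ^+ 3).
by rewrite /z !exprS; ring.
Qed.

Lemma lifting_the_exponent3 j k n : (0 < j)%N -> exists r : R,
  (1 + 3 ^+ j * v) ^+ (3 ^ k * n) = 1 + 3 ^+ (j + k) * (n%:R * v + 3 * r).
Proof.
move=> j_gt0; elim: k => [|k [r IHk]].
  by rewrite expn0 mul1n addn0; apply: exp_one_plus_pow3.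
rewrite expnSr mulnAC exprM IHk addnS.
by apply: cube_one_plus_pow3; rewrite addn_gt0 j_gt0.
Qed.

End LiftingTheExponent.

(* (x0, x1, x2) encodes x0 + x1 t + x2 t^2; products are reduced with
   t^3 = t^2 + 1 and t^4 = t^2 + t + 1. *)
Definition nring := (int * int * int)%type.
HB.instance Definition _ := GRing.Zmodule.on nring.

Definition nmul (x y : nring) : nring :=
  let: (x0, x1, x2) := x in let: (y0, y1, y2) := y in
  let c3 := x1 * y2 + x2 * y1 in let c4 := x2 * y2 in
  (x0 * y0 + c3 + c4, x0 * y1 + x1 * y0 + c4, x0 * y2 + x1 * y1 + x2 * y0 + c3 + c4).

Lemma naddE (x0 x1 x2 y0 y1 y2 : int) :
  (x0, x1, x2) + (y0, y1, y2) = (x0 + y0, x1 + y1, x2 + y2) :> nring.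
Proof. by []. Qed.

Lemma nmulA : associative nmul.
Proof. by move=> [[? ?] ?] [[? ?] ?] [[? ?] ?]; congr (_, _, _); ring. Qed.

Lemma nmulC : commutative nmul.
Proof. by move=> [[? ?] ?] [[? ?] ?]; congr (_, _, _); ring. Qed.

Lemma nmul1 : left_id ((1, 0, 0) : nring) nmul.
Proof. by move=> [[? ?] ?]; congr (_, _, _); ring. Qed.

Lemma nmulDl : left_distributive nmul +%R.
Proof.
by move=> [[? ?] ?] [[? ?] ?] [[? ?] ?]; rewrite !naddE /=; congr (_, _, _); ring.
Qed.

Lemma nring1_neq0 : ((1, 0, 0) : nring) != 0.
Proof. by []. Qed.

HB.instance Definition _ :=
  GRing.Zmodule_isComNzRing.Build nring nmulA nmulC nmul1 nmulDl nring1_neq0.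

Definition nt : nring := (0, 1, 0).

Lemma ntX n : nt ^+ n.+2 =
  ((narayana n)%:Z, (narayana n.+2)%:Z - (narayana n.+1)%:Z, (narayana n.+1)%:Z).
Proof.
elim: n => [|n IHn]; first by [].
rewrite exprS IHn [in LHS]/GRing.mul /= narayana_rec PoszD.
by congr (_, _, _); ring.
Qed.

Definition nform (x : nring) : int := x.2 - x.1.1.

Lemma nform_ntX n : nform (nt ^+ n.+4) = (narayana n)%:Z.
Proof. by rewrite /nform ntX /= !narayana_rec !PoszD; ring. Qed.

Lemma nform1 : nform 1 = -1.
Proof. by []. Qed.

Lemma nformD x y : nform (x + y) = nform x + nform y.
Proof. by case: x y => [[? ?] ?] [[? ?] ?]; rewrite naddE /nform /=; ring. Qed.

Lemma nring_natrE c : (c%:R : nring) = (c%:Z, 0, 0).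
Proof. by elim: c => // c IHc; rewrite mulrS IHc naddE. Qed.

Lemma nform_natrM c x : nform (c%:R * x) = c%:R * nform x.
Proof.
by case: x => [[? ?] ?]; rewrite nring_natrE /nform [in LHS]/GRing.mul /=; ring.
Qed.

(* Read off ntX 22: a_22 = 1 + 9 * 208, a_24 - a_23 = 9 * 142, a_23 = 9 * 305. *)
Definition nu : nring := (208, 142, 305).

Lemma ntX24 : nt ^+ 24 = 1 + 3 ^+ 2 * nu.
Proof. by vm_compute. Qed.

Lemma nform_nu : nform nu = 97.
Proof. by []. Qed.

Lemma narayana_add24_mod9 n : (narayana (n + 24) = narayana n %[mod 9])%N.
Proof.
have : (narayana (n + 24))%:Z =
       (narayana n)%:Z + (3 ^ 2)%:R * nform (nt ^+ n.+4 * nu).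
  rewrite -!nform_ntX -[(n + 24).+4]/(n.+4 + 24)%N exprD ntX24 -natrX.
  by rewrite mulrDr mulr1 nformD mulrCA nform_natrM.
lia.
Qed.

Local Close Scope ring_scope.

Lemma eq_mod_period (f : nat -> nat) (T d : nat) :
  (forall n, f (n + T) = f n %[mod d]) -> forall n, f n = f (n %% T) %[mod d].
Proof.
move=> fT n; rewrite {1}(divn_eq n T) addnC.
elim: (n %/ T) => [|q IHq]; first by rewrite mul0n addn0.
by rewrite mulSnr addnA fT.
Qed.

Lemma dvdn_narayana_add1_mod24 d i :
  d %| 9 -> (d %| narayana i + 1) = (d %| narayana (i %% 24) + 1).
Proof.
move=> d_dvd9; have period := eq_mod_period narayana_add24_mod9 i.
have period1 : narayana i + 1 = narayana (i %% 24) + 1 %[mod 9].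
  by rewrite -modnDml period modnDml.
by rewrite /dvdn -[in LHS](modn_dvdm _ d_dvd9) period1 modn_dvdm.
Qed.

Lemma narayana_add1_coprime3 r :
  r < 24 -> r %% 8 != 4 -> ~~ (3 %| narayana r + 1).
Proof. by do 24?case: r => [//|r]. Qed.

Lemma narayana_add1_exact3 r : (r == 4) || (r == 12) ->
  (3 %| narayana r + 1) && ~~ (3 ^ 2 %| narayana r + 1).
Proof. by case/orP=> /eqP ->. Qed.

Lemma logn_eq1 p m : prime p -> p %| m -> ~~ (p ^ 2 %| m) -> logn p m = 1.
Proof.
move=> p_pr p_dvd_m p2_ndvd_m; have m_gt0 : 0 < m.
  by rewrite lt0n; apply: contraNneq p2_ndvd_m => ->; rewrite dvdn0.
move: p_dvd_m p2_ndvd_m; rewrite -{1}[p]expn1 !(pfactor_dvdn _ p_pr m_gt0).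
lia.
Qed.

Lemma logn_pfactorM p e u : prime p -> ~~ (p %| u) -> logn p (p ^ e * u) = e.
Proof. by move=> p_pr p_ndvd_u; rewrite mulnC logn_Gauss ?prime_coprime ?pfactorK. Qed.

Lemma logn_narayana_24m_sub4 m : 0 < m ->
  logn 3 (narayana (24 * m - 4) + 1) = (logn 3 m).+2.
Proof.
move=> m_gt0; have [n cop_n m_eq] := pfactor_coprime (isT : prime 3) m_gt0.
move: m_eq; set k := logn 3 m => m_eq.
have [r ntX_m] := lifting_the_exponent3 nu k n (isT : 0 < 2).
have a_eq : Posz (narayana (24 * m - 4) + 1) =
             (Posz (3 ^ k.+2)%N * (97 * Posz n + 3 * nform r))%R.
  rewrite PoszD -nform_ntX.
  have -> : (24 * m - 4).+4 = 24 * (3 ^ k * n) by rewrite m_eq; lia.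
  rewrite exprM ntX24 ntX_m -natrX nformD nform_natrM nform1 nformD !nform_natrM.
  rewrite nform_nu add2n.
  ring.
have /= := congr1 absz a_eq; rewrite abszM /= => ->; rewrite logn_pfactorM //.
have : ~~ (3 %| (97 * Posz n + 3 * nform r)%R)%Z.
  by rewrite prime_coprime // in cop_n; lia.
by rewrite dvdzE.
Qed.

Theorem theorem3p6 (i : nat) : 1 <= i ->
  (i %% 8 != 4 -> logn 3 (narayana i + 1) = 0) /\
  ((i %% 24 == 4) || (i %% 24 == 12) -> logn 3 (narayana i + 1) = 1) /\
  (i %% 24 = 20 -> logn 3 (narayana i + 1) = (logn 3 (i + 4)).+1).
Proof.
move=> _; split; [|split] => i_res.
- apply: logn_coprime; rewrite prime_coprime // dvdn_narayana_add1_mod24 //.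
  by apply: narayana_add1_coprime3; rewrite ?ltn_pmod ?modn_dvdm.
- have /andP[dvd3 ndvd9] := narayana_add1_exact3 i_res.
  by apply: logn_eq1; rewrite // dvdn_narayana_add1_mod24.
have i_eq : i = 24 * (i %/ 24).+1 - 4 by rewrite {1}(divn_eq i 24) i_res; lia.
have -> : i + 4 = 3 * (8 * (i %/ 24).+1) by rewrite {1}(divn_eq i 24) i_res; lia.
by rewrite {1}i_eq logn_narayana_24m_sub4 // lognM // [logn 3 3]logn_prime // logn_Gauss.
Qed.
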